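(* Let $D$ be a locally semicomplete digraph such that $S(D)$ is chordal and $D$ contains neither an induced directed cycle consisting of non-symmetric arcs nor any of the digraphs $F_a, F_b, F_c, F_d$ (described in the context) as an induced subdigraph. Suppose $(u,v,w)$ is a violating triple. Then: (1) if $uv$ is a non-symmetric arc, there exists a di-simplicial vertex $u'$ of $S(D)$ (possibly $u'=u$) such that $(u',v,w)$ is a violating triple and $u'v$ is a non-symmetric arc; (2) if $vw$ is a non-symmetric arc, there exists a di-simplicial vertex $w'$ of $S(D)$ (possibly $w'=w$) such that $(u,v,w')$ is a violating triple and $vw'$ is a non-symmetric arc.
   Context: Digraphs are finite, have no loops and no multiple arcs, but may contain digons; an arc lying in a digon is called symmetric, otherwise non-symmetric. $N^-(v)$ / $N^+(v)$ denote the sets of in-/out-neighbours of $v$. A vertex $v$ is di-simplicial if for every $u \in N^-(v)$ and $w \in N^+(v)$ with $u \neq w$, $uw$ is an arc. A digraph is chordal if every induced subdigraph contains a di-simplicial vertex. $S(D)$ is the spanning subdigraph of $D$ consisting of all symmetric arcs of $D$. A digraph is semicomplete if between any two distinct vertices there is at least one arc; $D$ is locally semicomplete if for every vertex $v$, both $N^-(v)$ and $N^+(v)$ induce semicomplete subdigraphs. A directed cycle $v_1\dots v_kv_1$ is induced if there is no arc between $v_i,v_j$ whenever $|i-j|\notin\{1,k-1\}$. A violating triple is an ordered triple $(u,v,w)$ of vertices where $v$ is a di-simplicial vertex of $S(D)$, $u \in N^-(v)$, $w \in N^+(v)$, $u \neq w$, and $uw$ is not an arc of $D$. The digraphs $F_a,F_b,F_c$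 have vertex set $\{1,2,3,4\}$ with symmetric arcs $1\leftrightarrow 3$ and $2 \leftrightarrow 4$, plus: $F_a$: non-symmetric arcs $1\to2$, $2\to3$, $4\to1$ and symmetric arc $3\leftrightarrow4$; $F_b$: non-symmetric arcs $1\to2$, $2\to3$, $3\to4$, $4\to1$; $F_c$: non-symmetric arcs $1\to2$, $2\to3$, $4\to3$, $4\to1$. $F_d$ is the directed 3-cycle $1\to2\to3\to1$ with all arcs non-symmetric. *)

From mathcomp Require Import all_boot.
Set Implicit Arguments. Unset Strict Implicit. Unset Printing Implicit Defensive.

(* Loops are excluded by a separate
   hypothesis [irreflexive A]; multiple arcs cannot occur; digons allowed. *)

Section Digraphs.
Variable T : finType.
Implicit Types (A : rel T).

Definition symm_part A : rel T := fun x y => A x y && A y x.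

Definition nonsym_arc A (x y : T) : bool := A x y && ~~ A y x.

Definition disimplicial A (v : T) : Prop :=
  forall u w, A u v -> A v w -> u != w -> A u w.

Definition disimplicial_in A (X : {set T}) (v : T) : Prop :=
  v \in X /\
  forall u w, u \in X -> w \in X -> A u v -> A v w -> u != w -> A u w.

Definition chordal A : Prop :=
  forall X : {set T}, X != set0 -> exists v, disimplicial_in A X v.

Definition semicomplete_on A (X : {set T}) : Prop :=
  forall x y, x \in X -> y \in X -> x != y -> A x y || A y x.

Definition in_nbhd A (v : T) : {set T} := [set u | A u v].
Definition out_nbhd A (v : T) : {set T} := [set w | A v w].

Definition locally_semicomplete A : Prop :=
  forall v, semicomplete_on A (in_nbhd A v) /\ semicomplete_on A (out_nbhd A v).

Definition has_induced_nonsym_cycle A : Prop :=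
  exists (k : nat) (f : 'I_k -> T),
    2 < k /\ injective f /\
    (forall i j : 'I_k, j = (i.+1 %% k) :> nat -> nonsym_arc A (f i) (f j)) /\
    (forall i j : 'I_k, j <> (i.+1 %% k) :> nat -> i <> (j.+1 %% k) :> nat ->
        ~~ A (f i) (f j)).

Definition contains_induced (n : nat) (F : rel 'I_n) A : Prop :=
  exists f : 'I_n -> T, injective f /\ forall i j, A (f i) (f j) = F i j.

End Digraphs.

(* The small digraphs; vertex k of the paper is the ordinal k-1. *)
Definition arcs_rel n (E : seq (nat * nat)) : rel 'I_n :=
  fun i j => (nat_of_ord i, nat_of_ord j) \in E.

(* symmetric 1<->3, 2<->4, non-symmetric 1->2, 2->3, 4->1, symmetric 3<->4 *)
Definition F_a : rel 'I_4 :=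
  @arcs_rel 4 [:: (0,2); (2,0); (1,3); (3,1); (0,1); (1,2); (3,0); (2,3); (3,2)].
(* symmetric 1<->3, 2<->4, non-symmetric 1->2, 2->3, 3->4, 4->1 *)
Definition F_b : rel 'I_4 :=
  @arcs_rel 4 [:: (0,2); (2,0); (1,3); (3,1); (0,1); (1,2); (2,3); (3,0)].
(* symmetric 1<->3, 2<->4, non-symmetric 1->2, 2->3, 4->3, 4->1 *)
Definition F_c : rel 'I_4 :=
  @arcs_rel 4 [:: (0,2); (2,0); (1,3); (3,1); (0,1); (1,2); (3,2); (3,0)].
Definition F_d : rel 'I_3 := @arcs_rel 3 [:: (0,1); (1,2); (2,0)].

Definition violating_triple (T : finType) (A : rel T) (u v w : T) : Prop :=
  disimplicial (symm_part A) v /\ A u v /\ A v w /\ u != w /\ ~~ A u w.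

From mathcomp Require Import all_boot.
Set Implicit Arguments. Unset Strict Implicit. Unset Printing Implicit Defensive.

(* For fixed v and w let X be the set of vertices x such that x -> v is
   non-symmetric and x -> w is not an arc; X contains u.  No vertex of X is a
   symmetric neighbour of w, and, by local semicompleteness and the absence of
   F_b, F_c and F_d, every symmetric neighbour of X outside X is a symmetric
   neighbour of w.  In the chordal graph S(D) such a set X contains a vertex
   that is simplicial in the whole graph (a variant of Dirac's lemma, proved by
   induction on X together with a clique containing its boundary), and that
   vertex is the required u'.  Part (2) is part (1) for the converse digraph:
   S(D), local semicompleteness and F_b, F_c, F_d are invariant under reversing
   all arcs. *)

Section ChordalGraph.
Variables (T : finType) (S : rel T).
Hypotheses (S_chordal : chordal S) (S_sym : symmetric S) (S_irr : irreflexive S).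

Definition clique (K : {set T}) : Prop :=
  forall a b, a \in K -> b \in K -> a != b -> S a b.

Lemma disimplicial_of_in (W : {set T}) x :
  disimplicial_in S W x -> (forall y, S x y -> y \in W) -> disimplicial S x.
Proof.
by move=> [_ x_simp] nbW a b ax xb; apply: x_simp; rewrite // nbW // S_sym.
Qed.

Lemma disimplicial_of_clique (W : {set T}) x :
  clique W -> (forall y, S x y -> y \in W) -> disimplicial S x.
Proof. by move=> cliqueW nbW a b ax xb; apply: cliqueW; rewrite // nbW // S_sym. Qed.

Lemma exists_disimplicial_clique_boundary (X K : {set T}) :
  X != set0 -> clique K ->
  (forall x y, x \in X -> S x y -> y \notin X -> y \in K) ->
  exists2 x, x \in X & disimplicial S x.
Proof.
have [n] := ubnP #|X :|: K|; elim: n X K => // n IH X K ltXKn X0 cliqueK bdK.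
set W := X :|: K.
have nbW z y : z \in X -> S z y -> y \in W.
  by move=> zX zy; rewrite inE; case: (boolP (y \in X)) => //= /(bdK z y zX zy).
have [s s_simp] : exists s, disimplicial_in S W s.
  by apply: S_chordal; case/set0Pn: X0 => x xX; apply/set0Pn; exists x; rewrite inE xX.
have [sW nbs_clique] := s_simp.
have [sX | sNX] := boolP (s \in X).
  by exists s => //; apply: disimplicial_of_in s_simp _ => y; apply: nbW.
have sK : s \in K by move: sW; rewrite inE (negbTE sNX).
set X' := [set z in X | ~~ S s z]; set K' := [set z in W | S s z].
have [X'0 | X'_neq0] := eqVneq X' set0.
  have s_adj z : z \in W -> z != s -> S s z.
    rewrite inE => /orP[zX _ | zK zs]; last by apply: cliqueK; rewrite // eq_sym.
    apply/negPn/negP => nsz; have : z \in X' by rewrite inE zX nsz.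
    by rewrite X'0 inE.
  have cliqueW : clique W.
    move=> a b aW bW ab; have [a_s | a_s] := eqVneq a s.
      by rewrite a_s s_adj // -a_s eq_sym.
    have [b_s | b_s] := eqVneq b s; first by rewrite b_s S_sym s_adj.
    by apply: nbs_clique => //; [rewrite S_sym|]; apply: s_adj.
  case/set0Pn: X0 => x xX; exists x => //.
  by apply: disimplicial_of_clique cliqueW _ => y; apply: nbW.
have ltX'K' : #|X' :|: K'| < n.
  suff /proper_card ltW : X' :|: K' \proper W by apply: leq_trans ltW ltXKn.
  apply/properP; split.
    by apply/subsetP => z; rewrite !inE => /orP[/andP[] | /andP[]] ->; rewrite ?orbT.
  by exists s; rewrite ?sW // !inE S_irr (negbTE sNX) andbF.
have cliqueK' : clique K'.
  move=> a b /setIdP[aW sa] /setIdP[bW sb] ab.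
  by apply: nbs_clique => //; rewrite S_sym.
have bdK' z y : z \in X' -> S z y -> y \notin X' -> y \in K'.
  move=> /setIdP[zX szN] zy yNX'; apply/setIdP; split; first exact: nbW zy.
  have [yX | yNX] := boolP (y \in X); first by move: yNX'; rewrite inE yX negbK.
  by apply: cliqueK sK (bdK _ _ zX zy yNX) _; apply: contraNneq szN => ->; rewrite S_sym.
have [x] := IH X' K' ltX'K' X'_neq0 cliqueK' bdK'.
by rewrite inE => /andP[xX _] x_simp; exists x.
Qed.

Lemma exists_disimplicial_away (X : {set T}) w :
  X != set0 -> w \notin X -> (forall x, x \in X -> ~~ S x w) ->
  (forall x y, x \in X -> S x y -> y \notin X -> S y w) ->
  exists2 x, x \in X & disimplicial S x.
Proof.
move=> X0 wNX XNw bdX.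
set Z := w |: (X :|: [set y | [exists x in X, S x y]]).
have wZ : w \in Z by rewrite !inE eqxx.
have nbZ x y : x \in X -> S x y -> y \in Z.
  by move=> xX xy; rewrite !inE; apply/or3P/Or33/existsP; exists x; rewrite xX.
have [s s_simp] : exists s, disimplicial_in S Z s.
  by apply: S_chordal; apply/set0Pn; exists w.
have [sZ nbs_clique] := s_simp.
have [sX | sNX] := boolP (s \in X).
  by exists s => //; apply: disimplicial_of_in s_simp _ => y; apply: nbZ.
have [sw | s_w] := eqVneq s w.
  apply: (@exists_disimplicial_clique_boundary X [set y in Z | S w y]) => //.
    move=> a b /setIdP[aZ wa] /setIdP[bZ wb] ab.
    by apply: nbs_clique; rewrite ?sw // S_sym.
  move=> x y xX xy yNX; apply/setIdP; split; first exact: nbZ xy.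
  by rewrite S_sym (bdX x).
have /existsP[x /andP[xX xs]] : [exists x in X, S x s].
  by move: sZ; rewrite !inE (negbTE s_w) (negbTE sNX).
have xZ : x \in Z by rewrite !inE xX orbT.
have xw : x != w by apply: contraNneq wNX => <-.
by have := nbs_clique x w xZ wZ xs (bdX _ _ xX xs sNX) xw; rewrite (negbTE (XNw x xX)).
Qed.
End ChordalGraph.

Section Digraph.
Variables (T : finType) (A : rel T).
Hypothesis A_irr : irreflexive A.

Lemma symm_part_sym : symmetric (symm_part A).
Proof. by move=> x y; rewrite /symm_part andbC. Qed.

Lemma symm_part_irr : irreflexive (symm_part A).
Proof. by move=> x; rewrite /symm_part A_irr. Qed.

Lemma contains_induced_of_semicomplete n (F : rel 'I_n) (f : 'I_n -> T) :
  (forall i j, i != j -> F i j || F j i) ->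
  (forall i j, A (f i) (f j) = F i j) -> contains_induced F A.
Proof.
move=> F_sc fF; exists f; split=> // i j fij; apply/eqP/negPn/negP => /F_sc.
by rewrite -!fF fij A_irr.
Qed.

Lemma nonsym_triangle_free a b c : ~ contains_induced F_d A ->
  nonsym_arc A a b -> nonsym_arc A b c -> ~~ nonsym_arc A c a.
Proof.
move=> noFd /andP[ab ba] /andP[bc cb]; apply/negP => /andP[ca ac]; apply: noFd.
apply: (@contains_induced_of_semicomplete _ _ (nth a [:: a; b; c])).
  by do 2!case=> [[|[|[|//]]] ?].
do 2!case=> [[|[|[|//]]] ?]; rewrite /= ?A_irr ?ab ?bc ?ca //.
all: by apply/negbTE.
Qed.

Lemma F_b_free a b c d : ~ contains_induced F_b A ->
  symm_part A a c -> symm_part A b d ->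
  nonsym_arc A a b -> nonsym_arc A b c -> nonsym_arc A c d -> ~~ nonsym_arc A d a.
Proof.
move=> noFb /andP[ac ca] /andP[bd db] /andP[ab ba] /andP[bc cb] /andP[cd dc].
apply/negP => /andP[da ad]; apply: noFb.
apply: (@contains_induced_of_semicomplete _ _ (nth a [:: a; b; c; d])).
  by do 2!case=> [[|[|[|[|//]]]] ?].
do 2!case=> [[|[|[|[|//]]]] ?]; rewrite /= ?A_irr ?ac ?ca ?bd ?db ?ab ?bc ?cd ?da //.
all: by apply/negbTE.
Qed.

Lemma F_c_free a b c d : ~ contains_induced F_c A ->
  symm_part A a c -> symm_part A b d ->
  nonsym_arc A a b -> nonsym_arc A b c -> nonsym_arc A d c -> ~~ nonsym_arc A d a.
Proof.
move=> noFc /andP[ac ca] /andP[bd db] /andP[ab ba] /andP[bc cb] /andP[dc cd].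
apply/negP => /andP[da ad]; apply: noFc.
apply: (@contains_induced_of_semicomplete _ _ (nth a [:: a; b; c; d])).
  by do 2!case=> [[|[|[|[|//]]]] ?].
do 2!case=> [[|[|[|[|//]]]] ?]; rewrite /= ?A_irr ?ac ?ca ?bd ?db ?ab ?bc ?dc ?da //.
all: by apply/negbTE.
Qed.

End Digraph.

Section LocallySemicomplete.
Variables (T : finType) (A : rel T).
Hypotheses (A_irr : irreflexive A) (A_lsc : locally_semicomplete A).
Hypotheses (noFb : ~ contains_induced F_b A) (noFc : ~ contains_induced F_c A)
  (noFd : ~ contains_induced F_d A) (A_chordal : chordal (symm_part A)).

Lemma out_nbrs_adjacent z a b : A z a -> A z b -> a != b -> A a b || A b a.
Proof. by move=> za zb; apply: (A_lsc z).2; rewrite inE. Qed.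

Lemma in_nbrs_adjacent z a b : A a z -> A b z -> a != b -> A a b || A b a.
Proof. by move=> az bz; apply: (A_lsc z).1; rewrite inE. Qed.

Definition nonsym_tails (v w : T) : {set T} := [set x | nonsym_arc A x v && ~~ A x w].

Lemma nonsym_tails_boundary v w x y :
  disimplicial (symm_part A) v -> A v w ->
  x \in nonsym_tails v w -> symm_part A x y -> y \notin nonsym_tails v w ->
  symm_part A y w.
Proof.
move=> v_simp vw; rewrite !inE => /andP[/andP[xv vNx] xNw] xy_sym yNtail.
have /andP[xy yx] := xy_sym.
have x_w : x != w by apply: contraNneq vNx => ->.
have y_v : y != v by apply: contraNneq vNx => <-.
have y_w : y != w by apply: contraNneq xNw => <-.
have yv_adj := out_nbrs_adjacent xy xv y_v.
have yw_adj : A y w || A w y.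
  have [vy | vNy] := boolP (A v y); first exact: out_nbrs_adjacent vy vw y_w.
  have yv : A y v by rewrite (negbTE vNy) orbF in yv_adj.
  by move: yNtail; rewrite /nonsym_arc yv vNy /= negbK => ->.
have wx : A w x.
  case/orP: yw_adj => [yw | wy].
    by have := out_nbrs_adjacent yx yw x_w; rewrite (negbTE xNw).
  by have := in_nbrs_adjacent xy wy x_w; rewrite (negbTE xNw).
have wx_ns : nonsym_arc A w x by rewrite /nonsym_arc wx.
have xv_ns : nonsym_arc A x v by rewrite /nonsym_arc xv.
have wv : A w v.
  (* otherwise x -> v -> w -> x is an induced non-symmetric triangle *)
  apply/negPn/negP => wNv; move: wx_ns; apply/negP.
  by apply: nonsym_triangle_free xv_ns _; rewrite // /nonsym_arc vw.
have wv_sym : symm_part A w v by rewrite /symm_part wv vw.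
have vw_sym : symm_part A v w by rewrite /symm_part wv vw.
have [yv_sym | yNv_sym] := boolP (symm_part A y v).
  exact: v_simp yv_sym vw_sym y_w.
have [vy | vNy] := boolP (A v y).
  have vy_ns : nonsym_arc A v y.
    by move: yNv_sym; rewrite /nonsym_arc /symm_part vy andbT.
  case/orP: yw_adj => [yw | wy]; rewrite /symm_part ?yw ?wy ?andbT /=.
    apply/negPn/negP => wNy.
    have := F_b_free A_irr noFb wv_sym xy_sym wx_ns xv_ns vy_ns.
    by rewrite /nonsym_arc yw wNy.
  apply/negPn/negP => yNw; have wy_ns : nonsym_arc A w y by rewrite /nonsym_arc wy yNw.
  by have := F_c_free A_irr noFc xy_sym vw_sym xv_ns vy_ns wy_ns; rewrite wx_ns.
have yv_ns : nonsym_arc A y v.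
  by move: yv_adj; rewrite /nonsym_arc vNy (negbTE vNy) orbF andbT.
have yw : A y w by move: yNtail; rewrite yv_ns negbK.
rewrite /symm_part yw /=; apply/negPn/negP => wNy.
have := F_c_free A_irr noFc wv_sym xy_sym wx_ns xv_ns yv_ns.
by rewrite /nonsym_arc yw wNy.
Qed.

Lemma exists_disimplicial_nonsym_tail u v w :
  violating_triple A u v w -> nonsym_arc A u v ->
  exists u', disimplicial (symm_part A) u' /\
             violating_triple A u' v w /\ nonsym_arc A u' v.
Proof.
move=> [v_simp [_ [vw [_ uNw]]]] uv_ns.
have [x] : exists2 x, x \in nonsym_tails v w & disimplicial (symm_part A) x.
  apply: (exists_disimplicial_away A_chordal (symm_part_sym A) (symm_part_irr A_irr)
           (w := w)).
  - by apply/set0Pn; exists u; rewrite inE uv_ns uNw.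
  - by rewrite inE /nonsym_arc vw andbF.
  - by move=> x; rewrite inE /symm_part => /andP[_ /negbTE ->].
  - by move=> x y xX xy yNX; apply: nonsym_tails_boundary v_simp vw xX xy yNX.
rewrite inE => /andP[xv_ns xNw] x_simp; have /andP[xv vNx] := xv_ns.
by exists x; do !split=> //; apply: contraNneq vNx => ->.
Qed.

End LocallySemicomplete.

Section Converse.
Variables (T : finType) (A : rel T).

Definition converse : rel T := fun x y => A y x.

Definition self_converse n (F : rel 'I_n) : Prop :=
  exists2 g : 'I_n -> 'I_n, injective g & forall i j, F (g i) (g j) = F j i.

Lemma contains_induced_converse n (F : rel 'I_n) :
  self_converse F -> contains_induced F converse -> contains_induced F A.
Proof.
move=> [g g_inj gF] [f [f_inj fF]]; exists (f \o g); split; first exact: inj_comp.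
by move=> i j; rewrite -gF -fF.
Qed.

Lemma locally_semicomplete_converse :
  locally_semicomplete A -> locally_semicomplete converse.
Proof.
move=> A_lsc v; have [in_sc out_sc] := A_lsc v.
by split=> x y xN yN xy; rewrite /converse orbC; [apply: out_sc | apply: in_sc].
Qed.

Lemma symm_part_converse : symm_part converse =2 symm_part A.
Proof. by move=> x y; rewrite /symm_part andbC. Qed.

Lemma eq_disimplicial (S1 S2 : rel T) v :
  S1 =2 S2 -> disimplicial S1 v -> disimplicial S2 v.
Proof. by move=> eS v_simp a b; rewrite -!eS; apply: v_simp. Qed.

Lemma eq_chordal (S1 S2 : rel T) : S1 =2 S2 -> chordal S1 -> chordal S2.
Proof.
move=> eS S1_chordal X X0; have [v [vX v_simp]] := S1_chordal X X0.
by exists v; split=> // a b aX bX; rewrite -!eS; apply: v_simp.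
Qed.

Lemma violating_triple_converse u v w :
  violating_triple A u v w -> violating_triple converse w v u.
Proof.
move=> [v_simp [uv [vw [u_w uNw]]]]; rewrite /violating_triple eq_sym.
by do !split=> //; apply: eq_disimplicial v_simp => x y; rewrite symm_part_converse.
Qed.

End Converse.

Lemma F_b_self_converse : self_converse F_b.
Proof.
pose g (i : 'I_4) : 'I_4 := inord (nth 0 [:: 0; 3; 2; 1] i).
have gK : involutive g by case=> [[|[|[|[|//]]]] ?]; apply: val_inj; rewrite /= !inordK.
exists g; first exact: inv_inj gK.
by do 2!case=> [[|[|[|[|//]]]] ?]; rewrite /F_b /arcs_rel /= !inordK.
Qed.

Lemma F_c_self_converse : self_converse F_c.
Proof.
pose g (i : 'I_4) : 'I_4 := inord (nth 0 [:: 1; 0; 3; 2] i).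
have gK : involutive g by case=> [[|[|[|[|//]]]] ?]; apply: val_inj; rewrite /= !inordK.
exists g; first exact: inv_inj gK.
by do 2!case=> [[|[|[|[|//]]]] ?]; rewrite /F_c /arcs_rel /= !inordK.
Qed.

Lemma F_d_self_converse : self_converse F_d.
Proof.
pose g (i : 'I_3) : 'I_3 := inord (nth 0 [:: 0; 2; 1] i).
have gK : involutive g by case=> [[|[|[|//]]] ?]; apply: val_inj; rewrite /= !inordK.
exists g; first exact: inv_inj gK.
by do 2!case=> [[|[|[|//]]] ?]; rewrite /F_d /arcs_rel /= !inordK.
Qed.

Theorem lemma2p3 (T : finType) (A : rel T) :
  irreflexive A ->
  locally_semicomplete A ->
  chordal (symm_part A) ->
  ~ has_induced_nonsym_cycle A ->
  ~ contains_induced F_a A -> ~ contains_induced F_b A ->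
  ~ contains_induced F_c A -> ~ contains_induced F_d A ->
  forall u v w : T, violating_triple A u v w ->
    (nonsym_arc A u v ->
       exists u', disimplicial (symm_part A) u' /\
                  violating_triple A u' v w /\ nonsym_arc A u' v) /\
    (nonsym_arc A v w ->
       exists w', disimplicial (symm_part A) w' /\
                  violating_triple A u v w' /\ nonsym_arc A v w').
Proof.
move=> A_irr A_lsc A_chordal _ _ noFb noFc noFd u v w uvw.
split=> [|vw_ns]; first exact: exists_disimplicial_nonsym_tail.
have noF_converse n (F : rel 'I_n) :
    self_converse F -> ~ contains_induced F A -> ~ contains_induced F (converse A).
  by move=> F_sc; apply/contra_not/contains_induced_converse.
have [w' [w'_simp [w'vu w'v_ns]]] :=
  exists_disimplicial_nonsym_tail (A := converse A) A_irr
    (locally_semicomplete_converse A_lsc)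
    (noF_converse _ _ F_b_self_converse noFb) (noF_converse _ _ F_c_self_converse noFc)
    (noF_converse _ _ F_d_self_converse noFd)
    (eq_chordal (symm_part_converse (converse A)) A_chordal)
    (violating_triple_converse uvw) vw_ns.
exists w'; split; last by split=> //; apply: violating_triple_converse w'vu.
by apply: eq_disimplicial w'_simp => x y; rewrite symm_part_converse.
Qed.
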